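(* Let $X$ be a real Banach space. If $\Phi:X^*\to 2^X$ is $w^*$-maximal cyclically monotone with $D(\Phi)\neq\emptyset$, then there exists a proper convex weak$^*$-lower semicontinuous function $g:X^*\to(-\infty,+\infty]$ such that $\Phi(x^* )=\partial g(x^* )\cap X$ for every $x^*\in X^*$.
   Context: $X$ is identified with its canonical image in $X^{**}$; $\partial g(x^* )\cap X=\{x\in X:\langle y^*-x^*,x\rangle\le g(y^* )-g(x^* )\ \forall y^*\in X^*\}$ for $x^*\in\operatorname{dom} g$, empty otherwise. For $\Phi:X^*\to2^X$, $D(\Phi)=\{x^*:\Phi(x^* )\ne\emptyset\}$, $\mathrm{Gr}\,\Phi=\{(x^*,x):x\in\Phi(x^* )\}$. $\Phi$ is $w^*$-monotone if $\langle x-y,x^*-y^*\rangle\ge0$ whenever $x\in\Phi(x^* )$, $y\in\Phi(y^* )$. $\Phi$ is $w^*$-cyclically monotone if for every $n\ge2$, all $x_1^*,\dots,x_n^*\in D(\Phi)$ with $x_{n+1}^*=x_1^*$ and all $x_k\in\Phi(x_k^* )$, $\sum_{k=1}^n\langle x_k,x_k^*-x_{k+1}^*\rangle\ge0$. $\Phi$ is $w^*$-maximal cyclically monotone if it is $w^*$-monotone and $\Phi=\Psi$ whenever $\Psi$ is $w^*$-cyclically monotone with $\mathrm{Gr}\,\Phi\subset\mathrm{Gr}\,\Psi$. *)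

From Stdlib Require Import Reals List.
Open Scope R_scope.

Record BanachSpace := {
  carrier :> Type;
  vadd : carrier -> carrier -> carrier;
  vzero : carrier;
  vopp : carrier -> carrier;
  vscal : R -> carrier -> carrier;
  vnorm : carrier -> R;
  vadd_assoc : forall x y z, vadd x (vadd y z) = vadd (vadd x y) z;
  vadd_comm : forall x y, vadd x y = vadd y x;
  vadd_0l : forall x, vadd vzero x = x;
  vadd_oppr : forall x, vadd x (vopp x) = vzero;
  vscal_addl : forall a b x, vscal (a + b) x = vadd (vscal a x) (vscal b x);
  vscal_addr : forall a x y, vscal a (vadd x y) = vadd (vscal a x) (vscal a y);
  vscal_assoc : forall a b x, vscal a (vscal b x) = vscal (a * b) x;
  vscal_1 : forall x, vscal 1 x = x;
  vnorm_nonneg : forall x, 0 <= vnorm x;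
  vnorm_eq0 : forall x, vnorm x = 0 -> x = vzero;
  vnorm_scal : forall a x, vnorm (vscal a x) = Rabs a * vnorm x;
  vnorm_triangle : forall x y, vnorm (vadd x y) <= vnorm x + vnorm y;
  vcomplete : forall u : nat -> carrier,
    (forall eps, 0 < eps -> exists N, forall m n, (N <= m)%nat -> (N <= n)%nat ->
        vnorm (vadd (u m) (vopp (u n))) < eps) ->
    exists l, forall eps, 0 < eps -> exists N, forall n, (N <= n)%nat ->
        vnorm (vadd (u n) (vopp l)) < eps
}.

Arguments vadd {_}. Arguments vopp {_}. Arguments vscal {_}. Arguments vnorm {_}.

Definition bounded_linear (X : BanachSpace) (f : X -> R) : Prop :=
  (forall x y, f (vadd x y) = f x + f y) /\
  (forall a x, f (vscal a x) = a * f x) /\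
  (exists M, forall x, Rabs (f x) <= M * vnorm x).

Definition dual (X : BanachSpace) : Type := { f : X -> R | bounded_linear X f }.

(* Duality pairing <x^*, x> = x^*(x); X is identified with its image in X^{**}. *)
Definition pair {X : BanachSpace} (xs : dual X) (x : X) : R := proj1_sig xs x.

Inductive ereal := Fin (r : R) | PInf.

Definition ele (a b : ereal) : Prop :=
  match a, b with
  | Fin x, Fin y => x <= y
  | _, PInf => True
  | PInf, Fin _ => False
  end.

Definition eadd (a b : ereal) : ereal :=
  match a, b with Fin x, Fin y => Fin (x + y) | _, _ => PInf end.

(* scaling by a strictly positive real *)
Definition escal (t : R) (a : ereal) : ereal :=
  match a with Fin x => Fin (t * x) | PInf => PInf end.

(* proper: not identically +oo (never -oo by the codomain) *)
Definition proper_fun {X : BanachSpace} (g : dual X -> ereal) : Prop :=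
  exists xs, g xs <> PInf.

(* convex: g(t a + (1-t) b) <= t g(a) + (1-t) g(b) for 0 < t < 1
   (c is the functional t a + (1-t) b, described pointwise). *)
Definition convex_fun {X : BanachSpace} (g : dual X -> ereal) : Prop :=
  forall (a b c : dual X) (t : R), 0 < t < 1 ->
    (forall x, pair c x = t * pair a x + (1 - t) * pair b x) ->
    ele (g c) (eadd (escal t (g a)) (escal (1 - t) (g b))).

Definition wstar_open {X : BanachSpace} (U : dual X -> Prop) : Prop :=
  forall y, U y -> exists (l : list X) (eps : R), 0 < eps /\
    forall z, (forall x, In x l -> Rabs (pair z x - pair y x) < eps) -> U z.

Definition wstar_lsc {X : BanachSpace} (g : dual X -> ereal) : Prop :=
  forall r : R, wstar_open (fun xs => ~ ele (g xs) (Fin r)).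

Definition subdiff_X {X : BanachSpace} (g : dual X -> ereal) (xs : dual X) (x : X) : Prop :=
  exists c, g xs = Fin c /\
    forall ys : dual X, ele (Fin (pair ys x - pair xs x)) (eadd (g ys) (Fin (- c))).

Definition mmap (X : BanachSpace) := dual X -> X -> Prop.

Definition dom_nonempty {X : BanachSpace} (Phi : mmap X) : Prop :=
  exists xs x, Phi xs x.

Definition wstar_monotone {X : BanachSpace} (Phi : mmap X) : Prop :=
  forall xs ys x y, Phi xs x -> Phi ys y ->
    0 <= pair xs (vadd x (vopp y)) - pair ys (vadd x (vopp y)).

Fixpoint rsum (n : nat) (f : nat -> R) : R :=
  match n with O => 0 | S m => rsum m f + f m end.

Definition cnext (n k : nat) : nat := if Nat.eqb (S k) n then O else S k.

Definition wstar_cyclically_monotone {X : BanachSpace} (Phi : mmap X) : Prop :=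
  forall (n : nat) (xs : nat -> dual X) (x : nat -> X), (2 <= n)%nat ->
    (forall k, (k < n)%nat -> Phi (xs k) (x k)) ->
    0 <= rsum n (fun k => pair (xs k) (x k) - pair (xs (cnext n k)) (x k)).

Definition wstar_maximal_cyclically_monotone {X : BanachSpace} (Phi : mmap X) : Prop :=
  wstar_monotone Phi /\ wstar_cyclically_monotone Phi /\
  forall Psi : mmap X, wstar_cyclically_monotone Psi ->
    (forall xs x, Phi xs x -> Psi xs x) ->
    forall xs x, Psi xs x <-> Phi xs x.

(* Rockafellar's construction. Fix (s0, x0) in Gr Phi and let g(y) be the supremum,
   over all chains (s0, x0), (s1, x1), ..., (sn, xn) in Gr Phi, of
   <y - sn, xn> + sum_{k<n} <s(k+1) - sk, xk>.  As a supremum of w*-continuous affine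
   functions, g is convex and w*-lsc.  Cyclic monotonicity of Phi says exactly that
   g(s0) <= 0, so g is proper, and appending a point of Gr Phi to a chain shows that
   Gr Phi is contained in the graph of the subdifferential of g.  That graph is always
   w*-cyclically monotone, so maximality of Phi forces equality. *)
From Stdlib Require Import Reals Lra Lia ClassicalEpsilon Classical.
Open Scope R_scope.

Lemma rsum_ext (n : nat) (f g : nat -> R) :
  (forall k, (k < n)%nat -> f k = g k) -> rsum n f = rsum n g.
Proof.
  induction n as [|n IHn]; simpl; intros H; [reflexivity|].
  rewrite IHn by (intros; apply H; lia). rewrite H by lia. reflexivity.
Qed.

Lemma rsum_sub (n : nat) (f g : nat -> R) :
  rsum n (fun k => f k - g k) = rsum n f - rsum n g.
Proof. induction n as [|n IHn]; simpl; [lra|]. rewrite IHn. lra. Qed.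

Lemma rsum_le (n : nat) (f g : nat -> R) :
  (forall k, (k < n)%nat -> f k <= g k) -> rsum n f <= rsum n g.
Proof.
  induction n as [|n IHn]; simpl; intros H; [lra|].
  pose proof (IHn (fun k hk => H k ltac:(lia))). pose proof (H n ltac:(lia)). lra.
Qed.

Lemma rsum_shift (n : nat) (c : nat -> R) :
  rsum n (fun k => c (S k)) + c O = rsum n c + c n.
Proof. induction n as [|n IHn]; simpl; lra. Qed.

Lemma rsum_cnext (n : nat) (F : nat -> nat -> R) :
  rsum (S n) (fun k => F k (cnext (S n) k)) = rsum n (fun k => F k (S k)) + F n O.
Proof.
  simpl. unfold cnext at 2. rewrite Nat.eqb_refl. f_equal. apply rsum_ext.
  intros k hk. unfold cnext. destruct (Nat.eqb_spec (S k) (S n)); [lia|reflexivity].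
Qed.

Lemma cyclic_sum_le_0 (n : nat) (d c : nat -> R) : (1 <= n)%nat ->
  (forall k, (k < n)%nat -> d k <= c (cnext n k) - c k) -> rsum n d <= 0.
Proof.
  intros hn hd. destruct n as [|m]; [lia|].
  pose proof (rsum_le _ _ _ hd) as H.
  rewrite rsum_sub, (rsum_cnext m (fun _ j => c j)) in H. simpl in H |- *.
  pose proof (rsum_shift m c). lra.
Qed.

Definition esup (P : R -> Prop) : ereal :=
  match excluded_middle_informative (bound P /\ exists v, P v) with
  | left h => Fin (proj1_sig (completeness P (proj1 h) (proj2 h)))
  | right _ => PInf
  end.

(* The supremum of the empty set is [PInf] here, which is why non-emptiness appears. *)
Lemma esup_le_fin (P : R -> Prop) (b : R) :
  ele (esup P) (Fin b) <-> (exists v, P v) /\ (forall v, P v -> v <= b).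
Proof.
  unfold esup. destruct excluded_middle_informative as [[hb hne]|hn].
  - destruct completeness as [c [hub hlub]]; simpl. split.
    + intros hc. split; [exact hne|]. intros v hv. apply Rle_trans with c; auto.
    + intros [_ hbnd]. apply hlub. exact hbnd.
  - simpl. split; [intros []|]. intros [hne hbnd].
    apply hn. split; [exists b; exact hbnd | exact hne].
Qed.

Lemma esup_ub (P : R -> Prop) (v : R) : P v -> ele (Fin v) (esup P).
Proof.
  intros hv. destruct (esup P) as [c|] eqn:hc; simpl; [|exact I].
  assert (hle : ele (esup P) (Fin c)) by (rewrite hc; simpl; lra).
  apply esup_le_fin in hle. exact (proj2 hle v hv).
Qed.

Section AffineSup.

Variable X : BanachSpace.
Variable A : R -> X -> Prop.
Hypothesis A_nonempty : exists a x, A a x.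

Definition affine_sup (y : dual X) : ereal :=
  esup (fun v => exists a x, A a x /\ v = a + pair y x).

Lemma affine_sup_ge (a : R) (x : X) (y : dual X) :
  A a x -> ele (Fin (a + pair y x)) (affine_sup y).
Proof. intros hA. apply esup_ub. eauto. Qed.

Lemma affine_sup_le_fin (y : dual X) (r : R) :
  ele (affine_sup y) (Fin r) <-> forall a x, A a x -> a + pair y x <= r.
Proof.
  unfold affine_sup. rewrite esup_le_fin. split.
  - intros [_ h] a x hA. apply h. eauto.
  - intros h. split.
    + destruct A_nonempty as [a [x hA]]. eauto.
    + intros v [a [x [hA ->]]]. auto.
Qed.

Lemma affine_sup_convex : convex_fun affine_sup.
Proof.
  intros a b c t ht hc.
  destruct (affine_sup a) as [ca|] eqn:ha; [|destruct (affine_sup c); exact I].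
  destruct (affine_sup b) as [cb|] eqn:hb; [|destruct (affine_sup c); exact I].
  simpl. apply affine_sup_le_fin. intros a0 x hA.
  pose proof (affine_sup_ge a0 x a hA) as Ha. rewrite ha in Ha. simpl in Ha.
  pose proof (affine_sup_ge a0 x b hA) as Hb. rewrite hb in Hb. simpl in Hb.
  rewrite hc. nra.
Qed.

Lemma affine_sup_wstar_lsc : wstar_lsc affine_sup.
Proof.
  intros r y hy.
  assert (hx : exists a x, A a x /\ r < a + pair y x).
  { apply NNPP. intros hn. apply hy, affine_sup_le_fin. intros a x hA.
    apply Rnot_lt_le. intros hlt. apply hn. eauto. }
  destruct hx as [a [x [hA hr]]].
  exists (cons x nil), (a + pair y x - r). split; [lra|].
  intros z hz hle. rewrite affine_sup_le_fin in hle.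
  specialize (hle a x hA). specialize (hz x (or_introl eq_refl)).
  apply Rabs_def2 in hz. lra.
Qed.

End AffineSup.

Arguments affine_sup {X} A y.

Lemma subdiff_X_wstar_cyclically_monotone (X : BanachSpace) (g : dual X -> ereal) :
  wstar_cyclically_monotone (subdiff_X g).
Proof.
  intros n xs x hn hsub.
  set (c := fun k => match g (xs k) with Fin r => r | PInf => 0 end).
  assert (hd : forall k, (k < n)%nat ->
    pair (xs (cnext n k)) (x k) - pair (xs k) (x k) <= c (cnext n k) - c k).
  { intros k hk. destruct (hsub k hk) as [ck [hck hy]].
    assert (hnext : (cnext n k < n)%nat).
    { unfold cnext. destruct (Nat.eqb_spec (S k) n); lia. }
    destruct (hsub _ hnext) as [cn [hcn _]].
    specialize (hy (xs (cnext n k))). rewrite hcn in hy. simpl in hy.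
    unfold c. rewrite hcn, hck. lra. }
  pose proof (cyclic_sum_le_0 n _ _ ltac:(lia) hd) as H.
  rewrite rsum_sub in H |- *. lra.
Qed.

Definition snoc_at {A : Type} (q : nat -> A) (n : nat) (a : A) (k : nat) : A :=
  if Nat.eqb k n then a else q k.

Lemma snoc_at_eq {A : Type} (q : nat -> A) (n : nat) (a : A) : snoc_at q n a n = a.
Proof. unfold snoc_at. now rewrite Nat.eqb_refl. Qed.

Lemma snoc_at_lt {A : Type} (q : nat -> A) (n : nat) (a : A) (k : nat) :
  (k < n)%nat -> snoc_at q n a k = q k.
Proof. intros hk. unfold snoc_at. destruct (Nat.eqb_spec k n); [lia|reflexivity]. Qed.

Section Rockafellar.

Variable X : BanachSpace.
Variable Phi : mmap X.
Variables (s0 : dual X) (x0 : X).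

(* [chain_affine b s x]: some chain (s0, x0), ..., (s, x) in Gr Phi (the base point
   itself is not required to be in the graph) has the affine functional
   y |-> b + <y, x>, i.e. b = sum_{k<n} <s(k+1), xk> - sum_{k<=n} <sk, xk>. *)
Inductive chain_affine : R -> dual X -> X -> Prop :=
  | chain_start : chain_affine (- pair s0 x0) s0 x0
  | chain_step b s x s' x' : chain_affine b s x -> Phi s' x' ->
      chain_affine (b + pair s' x - pair s' x') s' x'.

Definition rockafellar_family (b : R) (x : X) : Prop := exists s, chain_affine b s x.

Definition rockafellar : dual X -> ereal := affine_sup rockafellar_family.

Lemma rockafellar_family_nonempty : exists b x, rockafellar_family b x.
Proof. exists (- pair s0 x0), x0, s0. constructor. Qed.

Lemma rockafellar_ge (b : R) (s y : dual X) (x : X) :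
  chain_affine b s x -> ele (Fin (b + pair y x)) (rockafellar y).
Proof. intros hc. apply affine_sup_ge. exists s. exact hc. Qed.

Lemma rockafellar_le_fin (y : dual X) (r : R) :
  ele (rockafellar y) (Fin r) <-> forall b s x, chain_affine b s x -> b + pair y x <= r.
Proof.
  unfold rockafellar. rewrite (affine_sup_le_fin _ _ rockafellar_family_nonempty).
  split.
  - intros h b s x hc. apply h. exists s. exact hc.
  - intros h b x [s hc]. exact (h b s x hc).
Qed.

Hypothesis Phi_base : Phi s0 x0.

Lemma chain_affine_seq (b : R) (s : dual X) (x : X) : chain_affine b s x ->
  exists n qs qx, qs O = s0 /\ qx O = x0 /\ qs n = s /\ qx n = x /\
    (forall k, (k <= n)%nat -> Phi (qs k) (qx k)) /\
    b = rsum n (fun k => pair (qs (S k)) (qx k)) - rsum (S n) (fun k => pair (qs k) (qx k)).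
Proof.
  induction 1 as [|b s x s' x' _ IH hp].
  - exists O, (fun _ => s0), (fun _ => x0). simpl.
    repeat split; auto. lra.
  - destruct IH as [n [qs [qx [h0s [h0x [hns [hnx [hphi hb]]]]]]]].
    exists (S n), (snoc_at qs (S n) s'), (snoc_at qx (S n) x').
    rewrite !snoc_at_eq, !(snoc_at_lt _ (S n) _ O) by lia.
    repeat split; auto.
    + intros k hk. destruct (Nat.eq_dec k (S n)) as [->|hne].
      * rewrite !snoc_at_eq. exact hp.
      * rewrite !snoc_at_lt by lia. apply hphi. lia.
    + cbn [rsum]. rewrite !snoc_at_eq, !(snoc_at_lt _ (S n) _ n) by lia.
      rewrite (rsum_ext n (fun k => pair (snoc_at qs (S n) s' (S k)) (snoc_at qx (S n) x' k))
                 (fun k => pair (qs (S k)) (qx k))),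
              (rsum_ext n (fun k => pair (snoc_at qs (S n) s' k) (snoc_at qx (S n) x' k))
                 (fun k => pair (qs k) (qx k))).
      * cbn [rsum] in hb. rewrite hns, hnx in hb |- *. lra.
      * intros k hk. rewrite !snoc_at_lt by lia. reflexivity.
      * intros k hk. rewrite !snoc_at_lt by lia. reflexivity.
Qed.

Hypothesis Phi_cyc : wstar_cyclically_monotone Phi.

(* Cyclic monotonicity of the chain closed up at (s0, x0). *)
Lemma chain_affine_le (b : R) (s : dual X) (x : X) :
  chain_affine b s x -> b + pair s0 x <= 0.
Proof.
  intros hc.
  destruct (chain_affine_seq b s x hc) as [n [qs [qx [h0s [h0x [hns [hnx [hphi hb]]]]]]]].
  destruct n as [|m].
  - simpl in hb. rewrite <- hnx, h0x. rewrite h0s, h0x in hb. lra.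
  - pose proof (Phi_cyc (S (S m)) qs qx ltac:(lia) (fun k hk => hphi k ltac:(lia))) as H.
    rewrite rsum_sub in H.
    pose proof (rsum_cnext (S m) (fun k j => pair (qs j) (qx k))) as E. cbn beta in E.
    rewrite E, h0s, hnx in H. lra.
Qed.

Lemma rockafellar_proper : proper_fun rockafellar.
Proof.
  exists s0. intros hinf.
  assert (hle : ele (rockafellar s0) (Fin 0)).
  { apply rockafellar_le_fin. exact chain_affine_le. }
  rewrite hinf in hle. exact hle.
Qed.

Lemma graph_subdiff_rockafellar (s : dual X) (x : X) :
  Phi s x -> subdiff_X rockafellar s x.
Proof.
  intros hp.
  assert (hext : forall b s1 x1, chain_affine b s1 x1 ->
            chain_affine (b + pair s x1 - pair s x) s x)
    by (intros b s1 x1 hc; exact (chain_step _ _ _ _ _ hc hp)).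
  assert (hs : ele (rockafellar s) (Fin (pair s x - pair s0 x))).
  { apply rockafellar_le_fin. intros b s1 x1 hc.
    pose proof (chain_affine_le _ _ _ (hext _ _ _ hc)). lra. }
  destruct (rockafellar s) as [c|] eqn:hc; [|destruct hs].
  exists c. split; [exact hc|]. intros ys.
  destruct (rockafellar ys) as [d|] eqn:hd; simpl; [|exact I].
  assert (hsd : ele (rockafellar s) (Fin (d - pair ys x + pair s x))).
  { apply rockafellar_le_fin. intros b s1 x1 hc1.
    pose proof (rockafellar_ge _ _ ys _ (hext _ _ _ hc1)) as H.
    rewrite hd in H. simpl in H. lra. }
  rewrite hc in hsd. simpl in hsd. lra.
Qed.

End Rockafellar.

Theorem mainTheorem10 (X : BanachSpace) (Phi : mmap X) :
  wstar_maximal_cyclically_monotone Phi -> dom_nonempty Phi ->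
  exists g : dual X -> ereal,
    proper_fun g /\ convex_fun g /\ wstar_lsc g /\
    forall (xs : dual X) (x : X), Phi xs x <-> subdiff_X g xs x.
Proof.
  intros [_ [Hcyc Hmax]] [s0 [x0 H0]].
  exists (rockafellar X Phi s0 x0). split; [|split; [|split]].
  - exact (rockafellar_proper X Phi s0 x0 H0 Hcyc).
  - apply affine_sup_convex, rockafellar_family_nonempty.
  - apply affine_sup_wstar_lsc, rockafellar_family_nonempty.
  - intros s x. symmetry. apply Hmax.
    + apply subdiff_X_wstar_cyclically_monotone.
    + intros s' x'. exact (graph_subdiff_rockafellar X Phi s0 x0 H0 Hcyc s' x').
Qed.
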